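(* Let $0<q<1$ and $\alpha,\gamma,z\in\mathbb{C}$. Then, as an identity of meromorphic functions in $z$, \[ \mathfrak{F}\!\left(\left\{\frac{q^{\frac12(\alpha+\gamma+k)-\frac34}\,(q^{\gamma-\alpha+k};q^2)_\infty\,\sqrt{z}}{(q^{\gamma-\alpha+k+1};q^2)_\infty\,\big(1-(1-z)q^{\gamma+k-1}\big)}\right\}_{k=1}^\infty\right) =\frac{(q^\gamma;q)_\infty}{((1-z)q^\gamma;q)_\infty}\,{}_1\phi_1(q^\alpha;q^\gamma;q,-q^\gamma z). \]
   Context: Complex powers of $q$ are $q^s=e^{s\log q}$. $(a;q)_\infty=\prod_{j\ge0}(1-aq^j)$, $(a;q)_k=\prod_{j=0}^{k-1}(1-aq^j)$, and ${}_1\phi_1(a;b;q,z)=\sum_{k\ge0}(-1)^kq^{k(k-1)/2}\frac{(a;q)_k}{(b;q)_k(q;q)_k}z^k$. For a complex sequence $x=\{x_k\}_{k=1}^{\infty}$ with $\sum_{k\ge1}|x_kx_{k+1}|<\infty$, \[ \mathfrak{F}(x)=1+\sum_{m=1}^\infty(-1)^m\sum_{k_1=1}^\infty\ \sum_{k_2=k_1+2}^\infty\cdots\sum_{k_m=k_{m-1}+2}^\infty x_{k_1}x_{k_1+1}\cdots x_{k_m}x_{k_m+1}. \] Since $\mathfrak{F}$ depends only on products $x_kx_{k+1}$, the branch of $\sqrt z$ is irrelevant. *)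

From Stdlib Require Import Reals ClassicalEpsilon.
From Coquelicot Require Import Coquelicot.
Open Scope C_scope.

(* Complex power of a positive real base: q^s = e^{s log q}, log q real. *)
Definition qpow (q : R) (s : C) : C :=
  let r := exp (Re s * ln q) in
  (r * cos (Im s * ln q), r * sin (Im s * ln q))%R.

(* Total limit of a complex sequence (the limit if it exists). *)
Definition Clim (u : nat -> C) : C :=
  epsilon (inhabits (RtoC 0)) (fun l => filterlim u eventually (locally l)).

Definition Cseries (a : nat -> C) : C := Clim (fun n => sum_n a n).

Fixpoint Cprod (f : nat -> C) (n : nat) : C :=
  match n with O => 1 | S n' => Cprod f n' * f n' end.

Definition qpoch (a : C) (q : R) (k : nat) : C :=
  Cprod (fun j => 1 - a * RtoC (q ^ j)) k.
Definition qpoch_inf (a : C) (q : R) : C := Clim (fun n => qpoch a q n).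

Definition phi11 (a b : C) (q : R) (z : C) : C :=
  Cseries (fun k => RtoC ((-1) ^ k * q ^ (k * (k - 1) / 2)) * qpoch a q k
                    / (qpoch b q k * qpoch (RtoC q) q k) * pow_n z k).

(* Inner nested sums: G 0 j = 1,
   G (m+1) j = sum_{k >= j} x_k x_{k+1} G m (k+2),
   so G m 1 = sum_{k_1>=1} sum_{k_2>=k_1+2} ... sum_{k_m>=k_{m-1}+2}
              x_{k_1}x_{k_1+1}...x_{k_m}x_{k_m+1}. *)
Fixpoint Gnest (x : nat -> C) (m : nat) (j : nat) : C :=
  match m with
  | O => 1
  | S m' => Cseries (fun i => x (j + i)%nat * x (j + i + 1)%nat * Gnest x m' (j + i + 2)%nat)
  end.

(* frakF(x) = 1 + sum_{m>=1} (-1)^m G m 1 ; x is indexed from 1 (x 0 unused). *)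
Definition frakF (x : nat -> C) : C :=
  1 + Cseries (fun m => RtoC ((-1) ^ (S m)) * Gnest x (S m) 1%nat).

(* Let x be the sequence of the theorem and G_m(j) the m-fold nested sum of frakF started at
   index j.  The tails F_j := 1 + sum_m (-1)^m G_m(j) satisfy F_j = F_(j+1) - x_j x_(j+1) F_(j+2)
   and F_j -> 1, and a Casoratian argument shows that this recurrence has only one solution
   tending to 1.  On the other side, R(beta) := (beta;q)_oo / ((1-z) beta;q)_oo
   * 1phi1(q^alpha; beta; q, -beta z) satisfies, by a contiguous relation of 1phi1,
   R(beta) = R(beta q) - Y(beta) R(beta q^2) with
   Y(beta) = z (q^alpha beta - q beta^2) / ((1 - (1-z) beta)(1 - (1-z) beta q)),
   and R(beta q^n) -> 1.  Since x_(n+1) x_(n+2) = Y(q^(gamma+n)), psi_k := R(q^(gamma+k-1)) is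
   that solution, so frakF(x) = psi_1 = R(q^gamma). *)

From Stdlib Require Import Reals Lra Lia ClassicalEpsilon.
From Coquelicot Require Import Coquelicot.
Open Scope C_scope.

Notation Ccv u l := (filterlim u eventually (locally (l : C))).
Notation Cis_series := (is_series (K:=C_AbsRing) (V:=C_NormedModule)).

Lemma Ccv_Cmod u l :
  Ccv u l <-> forall eps, (0 < eps)%R ->
    exists N, forall n, (N <= n)%nat -> (Cmod (u n - l) < eps)%R.
Proof.
  split.
  - intros H eps Heps.
    assert (Hs : (0 < eps / sqrt 2)%R).
    { apply Rdiv_lt_0_compat; [lra | apply sqrt_lt_R0; lra]. }
    destruct (proj1 (filterlim_locally u l) H (mkposreal _ Hs)) as [N HN].
    exists N. intros n Hn. specialize (HN n Hn).
    apply C_NormedModule_mixin_compat2 in HN. simpl in HN.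
    replace (sqrt 2 * (eps / sqrt 2))%R with eps in HN; [exact HN |].
    field. apply Rgt_not_eq, sqrt_lt_R0; lra.
  - intros H. apply filterlim_locally. intros eps.
    destruct (H eps (cond_pos eps)) as [N HN]. exists N. intros n Hn.
    apply C_NormedModule_mixin_compat1, HN, Hn.
Qed.

Lemma Clim_of u l : Ccv u l -> Clim u = l.
Proof.
  intros H. unfold Clim.
  pose proof (epsilon_spec (inhabits (RtoC 0)) (fun l => Ccv u l) (ex_intro _ l H)) as H'.
  symmetry. exact (@filterlim_locally_unique _ C_AbsRing C_NormedModule _ _ u _ _ H H').
Qed.

Lemma Cseries_of a l : Cis_series a l -> Cseries a = l.
Proof. apply Clim_of. Qed.

Lemma Ccv_unique u l1 l2 : Ccv u l1 -> Ccv u l2 -> l1 = l2.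
Proof. exact (@filterlim_locally_unique _ C_AbsRing C_NormedModule _ _ u l1 l2). Qed.

Lemma Cis_series_unique a l1 l2 : Cis_series a l1 -> Cis_series a l2 -> l1 = l2.
Proof. apply Ccv_unique. Qed.

Lemma Ccv_const c : Ccv (fun _ : nat => c) c.
Proof. apply filterlim_const. Qed.

Lemma Ccv_ext u v l : (forall n, u n = v n) -> Ccv u l -> Ccv v l.
Proof. apply filterlim_ext. Qed.

Lemma Ccv_plus u v a b : Ccv u a -> Ccv v b -> Ccv (fun n => u n + v n) (a + b).
Proof. intros Hu Hv. exact (filterlim_comp_2 _ _ _ Hu Hv (filterlim_plus a b)). Qed.

Lemma Ccv_bounded u l : Ccv u l -> exists M, (0 < M)%R /\ forall n, (Cmod (u n) <= M)%R.
Proof.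
  rewrite Ccv_Cmod. intros H. destruct (H 1%R ltac:(lra)) as [N HN].
  assert (Hinit : forall K, exists M, (0 < M)%R /\ forall n, (n < K)%nat -> (Cmod (u n) <= M)%R).
  { induction K as [|K [M [HM HK]]].
    - exists 1%R. split; [lra | intros; lia].
    - exists (M + Cmod (u K))%R. pose proof (Cmod_ge_0 (u K)). split; [lra |].
      intros n Hn. destruct (Nat.eq_dec n K) as [-> | Hne]; [lra |].
      specialize (HK n ltac:(lia)). lra. }
  destruct (Hinit N) as [M [HM HK]]. pose proof (Cmod_ge_0 l).
  exists (M + Cmod l + 1)%R. split; [lra |]. intros n.
  destruct (Compare_dec.le_lt_dec N n) as [Hn | Hn].
  - specialize (HN n Hn). replace (u n) with ((u n - l) + l) by ring.
    eapply Rle_trans; [apply Cmod_triangle | lra].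
  - specialize (HK n Hn). lra.
Qed.

(* [filterlim_mult] does not apply: the uniform structure of [C_AbsRing] is not
   convertible to that of [C_UniformSpace] used by [Ccv]. *)
Lemma Ccv_mult u v a b : Ccv u a -> Ccv v b -> Ccv (fun n => u n * v n) (a * b).
Proof.
  intros Hu Hv. destruct (Ccv_bounded _ _ Hu) as [M [HM HMb]].
  rewrite Ccv_Cmod in Hu, Hv |- *. intros eps He.
  pose proof (Cmod_ge_0 b) as Hb.
  destruct (Hu (eps / (2 * (Cmod b + 1)))%R) as [N1 H1].
  { apply Rdiv_lt_0_compat; lra. }
  destruct (Hv (eps / (2 * M)))%R as [N2 H2].
  { apply Rdiv_lt_0_compat; lra. }
  exists (N1 + N2)%nat. intros n Hn.
  specialize (H1 n ltac:(lia)). specialize (H2 n ltac:(lia)).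
  replace (u n * v n - a * b) with (u n * (v n - b) + (u n - a) * b) by ring.
  eapply Rle_lt_trans; [apply Cmod_triangle |]. rewrite !Cmod_mult.
  assert (T1 : (Cmod (u n) * Cmod (v n - b) < M * (eps / (2 * M)))%R).
  { apply Rle_lt_trans with (M * Cmod (v n - b))%R.
    - apply Rmult_le_compat_r; [apply Cmod_ge_0 | apply HMb].
    - apply Rmult_lt_compat_l; lra. }
  assert (T2 : (Cmod (u n - a) * Cmod b <= eps / (2 * (Cmod b + 1)) * (Cmod b + 1))%R).
  { apply Rmult_le_compat; try apply Cmod_ge_0; lra. }
  replace (M * (eps / (2 * M)))%R with (eps / 2)%R in T1 by (field; lra).
  replace (eps / (2 * (Cmod b + 1)) * (Cmod b + 1))%R with (eps / 2)%R in T2 by (field; lra).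
  lra.
Qed.

Lemma Ccv_minus u v a b : Ccv u a -> Ccv v b -> Ccv (fun n => u n - v n) (a - b).
Proof.
  intros Hu Hv. apply (Ccv_plus u (fun n => - v n)); [exact Hu |].
  eapply filterlim_comp; [exact Hv | exact (filterlim_opp (K:=C_AbsRing) b)].
Qed.

Lemma Ccv_shift u l J : Ccv u l -> Ccv (fun n => u (J + n)%nat) l.
Proof.
  rewrite !Ccv_Cmod. intros H eps He. destruct (H eps He) as [N HN].
  exists N. intros n Hn. apply HN. lia.
Qed.

Lemma Ccv_S_inv u l : Ccv (fun n => u (S n)) l -> Ccv u l.
Proof.
  rewrite !Ccv_Cmod. intros H eps He. destruct (H eps He) as [N HN].
  exists (S N). intros [|n] Hn; [lia |]. apply HN. lia.
Qed.

Lemma Ccv_inv u l : Ccv u l -> l <> 0 -> Ccv (fun n => / u n) (/ l).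
Proof.
  rewrite !Ccv_Cmod. intros H Hl0 eps He.
  set (m := Cmod l). assert (Hm : (0 < m)%R) by now apply Cmod_gt_0.
  destruct (H (m / 2)%R ltac:(lra)) as [N1 H1].
  destruct (H (eps * m * m / 2)%R) as [N2 H2].
  { assert (0 < eps * m * m)%R by (repeat apply Rmult_lt_0_compat; lra). lra. }
  exists (N1 + N2)%nat. intros n Hn.
  specialize (H1 n ltac:(lia)). specialize (H2 n ltac:(lia)).
  assert (Hun : (m / 2 <= Cmod (u n))%R).
  { pose proof (Cmod_triangle (u n) (l - u n)) as T.
    replace (u n + (l - u n)) with l in T by ring.
    replace (l - u n) with (- (u n - l)) in T by ring. rewrite Cmod_opp in T. fold m in T. lra. }
  assert (Hu0 : (u n : C) <> 0) by (intros E; rewrite E, Cmod_0 in Hun; lra).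
  replace (/ u n - / l) with (- (u n - l) / (u n * l)) by (field; auto).
  rewrite Cmod_div, Cmod_mult, Cmod_opp by (apply Cmult_neq_0; auto). fold m.
  assert (Hd : (0 < m / 2 * m)%R) by (apply Rmult_lt_0_compat; lra).
  apply Rle_lt_trans with (Cmod (u n - l) / (m / 2 * m))%R.
  - apply Rmult_le_compat_l; [apply Cmod_ge_0 |].
    apply Rinv_le_contravar; [exact Hd | apply Rmult_le_compat_r; lra].
  - apply Rlt_le_trans with (eps * m * m / 2 / (m / 2 * m))%R.
    + apply Rmult_lt_compat_r; [apply Rinv_0_lt_compat |]; lra.
    + right. field. lra.
Qed.

Lemma pow_le_1 (x : R) n : (0 <= x <= 1)%R -> (x ^ n <= 1)%R.
Proof.
  intros H. induction n as [|n IH]; simpl; [lra |].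
  assert (0 <= x ^ n)%R by (apply pow_le; lra). nra.
Qed.

Lemma pow_eventually_lt q eps : (0 < q < 1)%R -> (0 < eps)%R ->
  exists N, forall n, (N <= n)%nat -> (q ^ n < eps)%R.
Proof.
  intros Hq He. destruct (pow_lt_1_zero q ltac:(rewrite Rabs_pos_eq; lra) eps He) as [N HN].
  exists N. intros n Hn. specialize (HN n Hn). rewrite Rabs_pos_eq in HN; [exact HN |].
  apply pow_le; lra.
Qed.

Lemma exp_sub_1_le t : (0 <= t <= 1/2)%R -> (exp t - 1 <= 2 * t)%R.
Proof.
  intros Ht. pose proof (exp_ineq1_le (- t)) as H.
  assert (Hp : (0 < exp (- t))%R) by apply exp_pos.
  rewrite <- (Rinv_inv (exp t)), <- exp_Ropp.
  assert (/ exp (- t) <= / (1 - t))%R by (apply Rinv_le_contravar; lra).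
  assert (/ (1 - t) <= 1 + 2 * t)%R.
  { apply (Rmult_le_reg_r (1 - t)); [lra |]. rewrite Rinv_l by lra. nra. }
  lra.
Qed.

Lemma exp_le_compat x y : (x <= y)%R -> (exp x <= exp y)%R.
Proof.
  intros H. destruct (Rle_lt_or_eq_dec x y H) as [Hlt | ->]; [| lra].
  apply Rlt_le, exp_increasing, Hlt.
Qed.

Lemma Cmod_1_sub_ge (w : C) : (1 - Cmod w <= Cmod (1 - w))%R.
Proof.
  pose proof (Cmod_triangle (1 - w) w) as H.
  replace (1 - w + w) with (RtoC 1) in H by ring. rewrite Cmod_1 in H. lra.
Qed.

Lemma Cmod_sign_mult k (u : C) : Cmod (RtoC ((-1) ^ k) * u) = Cmod u.
Proof.
  rewrite Cmod_mult, Cmod_R, <- RPow_abs.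
  replace (Rabs (-1)) with 1%R by (rewrite Rabs_left; lra). rewrite pow1. ring.
Qed.

Lemma Cmod_le_1_add (x : C) B : (Cmod (x - 1) <= B)%R -> (Cmod x <= 1 + B)%R.
Proof.
  intros H. replace x with ((x - 1) + 1) by ring.
  eapply Rle_trans; [apply Cmod_triangle |]. rewrite Cmod_1. lra.
Qed.

(* [Cinv] is total, with [/ 0 = 0]; this makes the identity unconditional. *)
Lemma Cinv_mult_distr (x y : C) : / (x * y) = / x * / y.
Proof.
  assert (Cinv0 : / RtoC 0 = 0).
  { unfold Cinv. simpl. unfold Rdiv. rewrite !Rmult_0_l.
    apply injective_projections; simpl; ring. }
  destruct (Ceq_dec x 0) as [-> | Hx]; [rewrite Cmult_0_l, Cinv0; ring |].
  destruct (Ceq_dec y 0) as [-> | Hy]; [rewrite Cmult_0_r, Cinv0; ring |].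
  field. auto.
Qed.

(* Rewriting with these works on terms typed by Coquelicot's structure carriers,
   where [ring] fails to recognise [C]. *)
Lemma Cminus_0 (x : C) : x - 0 = x.
Proof. ring. Qed.

Lemma Cadd_sub_l (c x : C) : c + x - c = x.
Proof. ring. Qed.

Lemma Cmod_lim_sub_le u l c B : Ccv u l ->
  (forall n, Cmod (u n - c) <= B)%R -> (Cmod (l - c) <= B)%R.
Proof.
  rewrite Ccv_Cmod. intros H Hb. apply Rnot_lt_le. intros Hlt.
  destruct (H (Cmod (l - c) - B)%R ltac:(lra)) as [N HN].
  specialize (HN N (le_n _)). specialize (Hb N).
  pose proof (Cmod_triangle (u N - c) (- (u N - l))) as T.
  replace (u N - c + - (u N - l)) with (l - c) in T by ring.
  rewrite Cmod_opp in T. lra.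
Qed.

Lemma Ccv_of_geom_rate (u : nat -> C) l q N K : (0 < q < 1)%R ->
  (forall n, (N <= n)%nat -> (Cmod (u n - l) <= K * q ^ n)%R) -> Ccv u l.
Proof.
  intros Hq H. rewrite Ccv_Cmod. intros eps He.
  pose proof (Rabs_pos K) as HK.
  destruct (pow_eventually_lt q (eps / (Rabs K + 1))%R Hq) as [M HM].
  { apply Rdiv_lt_0_compat; lra. }
  exists (N + M)%nat. intros n Hn.
  specialize (HM n ltac:(lia)).
  assert (Hqn : (0 < q ^ n)%R) by (apply pow_lt; lra).
  apply Rle_lt_trans with ((Rabs K + 1) * q ^ n)%R.
  - eapply Rle_trans; [apply H; lia |].
    apply Rmult_le_compat_r; [lra |]. pose proof (Rle_abs K). lra.
  - apply Rlt_le_trans with ((Rabs K + 1) * (eps / (Rabs K + 1)))%R.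
    + apply Rmult_lt_compat_l; lra.
    + right. field. lra.
Qed.

Lemma Cis_scal c (a : nat -> C) l : Cis_series a l -> Cis_series (fun n => c * a n) (c * l).
Proof. exact (is_series_scal c a l). Qed.

Lemma Cis_plus (a b : nat -> C) la lb :
  Cis_series a la -> Cis_series b lb -> Cis_series (fun n => a n + b n) (la + lb).
Proof. exact (is_series_plus a b la lb). Qed.

Lemma Cis_minus (a b : nat -> C) la lb :
  Cis_series a la -> Cis_series b lb -> Cis_series (fun n => a n - b n) (la - lb).
Proof. exact (is_series_minus a b la lb). Qed.

Lemma Cis_series_tail (a : nat -> C) (l : C) :
  Cis_series a l -> Cis_series (fun k => a (S k)) (l - a O).
Proof.
  intros H. apply is_series_incr_1.
  match goal with |- is_series _ ?X => replace X with l; [exact H |] end.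
  change (@eq C l ((l - a O) + a O)). ring.
Qed.

Lemma Cis_series_cons (a : nat -> C) (c l : C) :
  Cis_series a l -> Cis_series (fun n => match n with O => c | S m => a m end) (c + l).
Proof.
  intros H. apply is_series_decr_1. simpl.
  match goal with |- is_series _ ?X => replace X with l; [exact H |] end.
  change (@eq C l ((c + l) + - c)). ring.
Qed.

Lemma ex_lim_of_summable_steps (u : nat -> C) (b : nat -> R) :
  (forall n, Cmod (u (S n) - u n) <= b n)%R -> ex_series b -> exists l, Ccv u l.
Proof.
  intros Hd Hb.
  destruct (ex_series_le (K:=C_AbsRing) (V:=C_CompleteNormedModule)
              (fun n => u (S n) - u n) b Hd Hb) as [L HL].
  assert (Hs : forall n, sum_n (fun n => u (S n) - u n) n = u (S n) - u O).
  { induction n as [|n IH]; [rewrite sum_O; reflexivity |].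
    rewrite sum_Sn, IH.
    change (@eq C (u (S n) - u O + (u (S (S n)) - u (S n))) (u (S (S n)) - u O)). ring. }
  exists (L + u O). apply Ccv_S_inv.
  apply (Ccv_ext (fun n => sum_n (fun n => u (S n) - u n) n + u O));
    [intros n; rewrite Hs; change (@eq C (u (S n) - u O + u O) (u (S n))); ring |].
  apply Ccv_plus; [exact HL | apply Ccv_const].
Qed.

Section GeometricDomination.

Variables (a : nat -> C) (C0 r : R).
Hypothesis Hr : (0 <= r < 1)%R.
Hypothesis Ha : forall n, (Cmod (a n) <= C0 * r ^ n)%R.

Lemma ex_Cseries_geom_dom : exists l, Cis_series a l.
Proof.
  destruct (ex_series_le (K:=C_AbsRing) (V:=C_CompleteNormedModule) a
              (fun n => C0 * r ^ n)%R Ha) as [l Hl]; [| exists l; exact Hl].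
  exists (C0 * / (1 - r))%R.
  apply (is_series_scal (K:=R_AbsRing) (V:=R_NormedModule) C0 (fun n => r ^ n)%R).
  apply is_series_geom. rewrite Rabs_pos_eq; lra.
Qed.

Lemma Cmod_Cseries_geom_dom_le (l : C) : Cis_series a l -> (Cmod l <= C0 / (1 - r))%R.
Proof.
  intros Hl.
  assert (HC0 : (0 <= C0)%R).
  { pose proof (Ha O) as H0. pose proof (Cmod_ge_0 (a O)). simpl in H0. lra. }
  assert (Hpartial : forall N, (Cmod (sum_n a N) <= C0 * (1 - r ^ S N) / (1 - r))%R).
  { induction N as [|N IH].
    - rewrite sum_O. eapply Rle_trans; [apply Ha |]. right. simpl. field. lra.
    - rewrite sum_Sn. eapply Rle_trans; [apply Cmod_triangle |].
      eapply Rle_trans; [apply Rplus_le_compat; [apply IH | apply Ha] |].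
      right. simpl. field. lra. }
  rewrite <- (Cminus_0 l).
  apply (Cmod_lim_sub_le (sum_n a)); [exact Hl |].
  intros n. rewrite (Cminus_0 (sum_n a n)).
  eapply Rle_trans; [apply Hpartial |].
  unfold Rdiv. apply Rmult_le_compat_r; [apply Rlt_le, Rinv_0_lt_compat; lra |].
  assert (0 <= r ^ S n)%R by (apply pow_le; lra). nra.
Qed.

End GeometricDomination.

Lemma ex_Cseries_ratio (t : nat -> C) K r : (0 <= r < 1)%R ->
  (forall k, (K <= k)%nat -> Cmod (t (S k)) <= r * Cmod (t k))%R ->
  exists l, Cis_series t l.
Proof.
  intros Hr Ht.
  assert (Hb : forall k, (Cmod (t (K + k)%nat) <= Cmod (t K) * r ^ k)%R).
  { induction k as [|k IH]; [rewrite Nat.add_0_r; simpl; lra |].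
    replace (K + S k)%nat with (S (K + k)) by lia.
    eapply Rle_trans; [apply Ht; lia |]. simpl. nra. }
  destruct (ex_Cseries_geom_dom (fun k => t (K + k)%nat) (Cmod (t K)) r Hr Hb) as [L HL].
  destruct K as [|K]; [exists L; exact HL |].
  exists (L + sum_n t K). apply (is_series_decr_n t (S K)); [lia |].
  match goal with |- is_series _ ?X => replace X with L; [exact HL |] end.
  change (@eq C L (L + sum_n t K + - sum_n t K)).
  rewrite <- Cplus_assoc, Cplus_opp_r, Cplus_0_r. reflexivity.
Qed.

Lemma Cmod_Cseries_ratio_sub_head_le (t : nat -> C) r l : (0 <= r < 1)%R ->
  (forall k, Cmod (t (S k)) <= r * Cmod (t k))%R ->
  Cis_series t l -> (Cmod (l - t O) <= Cmod (t O) * r / (1 - r))%R.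
Proof.
  intros Hr Ht Hl.
  apply (Cmod_Cseries_geom_dom_le (fun k => t (S k)) (Cmod (t O) * r)%R r Hr);
    [| exact (Cis_series_tail t l Hl)].
  induction n as [|n IH]; [simpl; rewrite Rmult_1_r, Rmult_comm; apply Ht |].
  eapply Rle_trans; [apply Ht |]. simpl.
  replace (Cmod (t O) * r * (r * r ^ n))%R with (r * (Cmod (t O) * r * r ^ n))%R by ring.
  apply Rmult_le_compat_l; [lra | exact IH].
Qed.

Lemma qpow_add q s t : qpow q (s + t) = qpow q s * qpow q t.
Proof.
  unfold qpow. destruct s as [s1 s2], t as [t1 t2]. simpl.
  apply injective_projections; simpl;
    rewrite !Rmult_plus_distr_r, exp_plus, ?cos_plus, ?sin_plus; ring.
Qed.

Lemma qpow_INR q n : (0 < q)%R -> qpow q (RtoC (INR n)) = RtoC (q ^ n).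
Proof.
  intros Hq. unfold qpow. simpl. rewrite !Rmult_0_l, cos_0, sin_0.
  rewrite <- Rpower_pow by exact Hq. unfold Rpower.
  apply injective_projections; simpl; ring.
Qed.

Lemma qpow_1 q : (0 < q)%R -> qpow q 1 = RtoC q.
Proof.
  intros Hq. change (qpow q (RtoC (INR 1)) = RtoC q).
  rewrite qpow_INR by exact Hq. f_equal. ring.
Qed.

Lemma qpow_add_INR q s n : (0 < q)%R -> qpow q (s + INR n) = qpow q s * RtoC (q ^ n).
Proof. intros Hq. rewrite qpow_add, qpow_INR; auto. Qed.

Lemma Cprod_neq0 (f : nat -> C) n : (forall j, f j <> 0) -> Cprod f n <> 0.
Proof.
  intros H. induction n as [|n IH]; simpl.
  - intros E. apply (f_equal fst) in E. simpl in E. lra.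
  - apply Cmult_neq_0; [exact IH | apply H].
Qed.

Lemma qpoch_S a q n : qpoch a q (S n) = qpoch a q n * (1 - a * RtoC (q ^ n)).
Proof. reflexivity. Qed.

Lemma qpoch_S_shift a q n : qpoch a q (S n) = (1 - a) * qpoch (a * RtoC q) q n.
Proof.
  induction n as [|n IH]; [unfold qpoch; simpl; ring |].
  rewrite qpoch_S, IH, qpoch_S, <- tech_pow_Rmult, RtoC_mult. ring.
Qed.

Lemma qpoch_q_neq0 q n : (0 < q < 1)%R -> qpoch (RtoC q) q n <> 0.
Proof.
  intros Hq. apply Cprod_neq0. intros j E.
  assert (q * q ^ j < 1)%R.
  { pose proof (pow_le_1 q j ltac:(lra)). pose proof (pow_le q j ltac:(lra)). nra. }
  rewrite <- RtoC_mult in E. apply (f_equal fst) in E. simpl in E. lra.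
Qed.

Lemma Cprod_1_sub_near_1 (u : nat -> C) (M q : R) n :
  (0 <= q < 1)%R -> (forall j, Cmod (u j) <= M * q ^ j)%R ->
  (Cmod (Cprod (fun j => (1 - u j)%C) n - 1)%C <= exp (M * (1 - q ^ n) / (1 - q)) - 1)%R.
Proof.
  intros Hq Hu. induction n as [|n IH].
  - simpl. replace (1 - 1) with (RtoC 0) by ring. rewrite Cmod_0.
    replace (M * (1 - 1) / (1 - q))%R with 0%R by (field; lra). rewrite exp_0. lra.
  - simpl Cprod. set (P := Cprod (fun j => 1 - u j) n) in *.
    set (E := exp (M * (1 - q ^ n) / (1 - q))) in *.
    replace (P * (1 - u n) - 1) with ((P - 1) * (1 - u n) + - u n) by ring.
    eapply Rle_trans; [apply Cmod_triangle |]. rewrite Cmod_opp, Cmod_mult.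
    assert (H1 : (Cmod (1 - u n) <= 1 + Cmod (u n))%R).
    { eapply Rle_trans; [apply Cmod_triangle |]. rewrite Cmod_opp, Cmod_1. lra. }
    pose proof (Cmod_ge_0 (P - 1)). pose proof (Cmod_ge_0 (u n)). pose proof (Hu n).
    (* [1 + |u n| <= exp (M q^n)] lets the exponential bound absorb the new factor. *)
    assert (Hx : (1 + Cmod (u n) <= exp (M * q ^ n))%R)
      by (pose proof (exp_ineq1_le (M * q ^ n)); lra).
    replace (exp (M * (1 - q ^ S n) / (1 - q))) with (E * exp (M * q ^ n))%R
      by (unfold E; rewrite <- exp_plus; f_equal; simpl; field; lra).
    assert (0 < E)%R by apply exp_pos.
    assert (Cmod (P - 1) * Cmod (1 - u n) <= (E - 1) * (1 + Cmod (u n)))%R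
      by (apply Rmult_le_compat; auto; apply Cmod_ge_0).
    assert (E * (1 + Cmod (u n)) <= E * exp (M * q ^ n))%R by (apply Rmult_le_compat_l; lra).
    nra.
Qed.

Lemma qpoch_near_1 a q n : (0 <= q < 1)%R ->
  (Cmod (qpoch a q n - 1)%C <= exp (Cmod a / (1 - q)) - 1)%R.
Proof.
  intros Hq. eapply Rle_trans.
  - apply (Cprod_1_sub_near_1 _ (Cmod a)); [exact Hq |].
    intros j. rewrite Cmod_mult, Cmod_R, Rabs_pos_eq by (apply pow_le; lra). lra.
  - assert (0 <= q ^ n)%R by (apply pow_le; lra). pose proof (Cmod_ge_0 a).
    apply Rplus_le_compat_r, exp_le_compat. unfold Rdiv.
    apply Rmult_le_compat_r; [apply Rlt_le, Rinv_0_lt_compat; lra | nra].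
Qed.

Lemma qpoch_cv a q : (0 <= q < 1)%R -> Ccv (qpoch a q) (qpoch_inf a q).
Proof.
  intros Hq. set (B := exp (Cmod a / (1 - q))).
  destruct (ex_lim_of_summable_steps (qpoch a q) (fun n => B * Cmod a * q ^ n)%R) as [l Hl].
  - intros n. rewrite qpoch_S.
    replace (qpoch a q n * (1 - a * RtoC (q ^ n)) - qpoch a q n)
      with (- (qpoch a q n * a * RtoC (q ^ n))) by ring.
    rewrite Cmod_opp, !Cmod_mult, Cmod_R, Rabs_pos_eq by (apply pow_le; lra).
    pose proof (Cmod_le_1_add _ _ (qpoch_near_1 a q n Hq)).
    apply Rmult_le_compat_r; [apply pow_le; lra |].
    apply Rmult_le_compat_r; [apply Cmod_ge_0 | unfold B; lra].
  - exists (B * Cmod a * / (1 - q))%R.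
    apply (is_series_scal (K:=R_AbsRing) (V:=R_NormedModule) (B * Cmod a)%R (fun n => q ^ n)%R).
    apply is_series_geom. rewrite Rabs_pos_eq; lra.
  - unfold qpoch_inf. rewrite (Clim_of (fun n => qpoch a q n) l Hl). exact Hl.
Qed.

Lemma qpoch_inf_shift a q : (0 <= q < 1)%R ->
  qpoch_inf a q = (1 - a) * qpoch_inf (a * RtoC q) q.
Proof.
  intros Hq. apply (Ccv_unique (fun n => qpoch a q (S n))).
  - exact (Ccv_shift _ _ 1 (qpoch_cv a q Hq)).
  - apply (Ccv_ext (fun n => (1 - a) * qpoch (a * RtoC q) q n));
      [intros n; rewrite qpoch_S_shift; reflexivity |].
    apply Ccv_mult; [apply Ccv_const | apply qpoch_cv, Hq].
Qed.

Lemma qpoch_inf_neq0_shift a q n : (0 <= q < 1)%R ->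
  qpoch_inf a q <> 0 -> qpoch_inf (a * RtoC (q ^ n)) q <> 0.
Proof.
  intros Hq H. induction n as [|n IH]; [replace (a * RtoC (q ^ 0)) with a by (simpl; ring); exact H |].
  rewrite (qpoch_inf_shift _ _ Hq) in IH.
  replace (a * RtoC (q ^ S n)) with (a * RtoC (q ^ n) * RtoC q)
    by (rewrite <- tech_pow_Rmult, RtoC_mult; ring).
  intros E. apply IH. rewrite E. ring.
Qed.

Lemma qpoch_inf_near_1 a q : (0 <= q < 1)%R ->
  (Cmod (qpoch_inf a q - 1)%C <= exp (Cmod a / (1 - q)) - 1)%R.
Proof.
  intros Hq. apply (Cmod_lim_sub_le (qpoch a q)); [apply qpoch_cv, Hq |].
  intros n. apply qpoch_near_1, Hq.
Qed.

Lemma qpoch_inf_geom_to_1 (b : C) q : (0 < q < 1)%R ->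
  Ccv (fun n => qpoch_inf (b * RtoC (q ^ n)) q) 1.
Proof.
  intros Hq. pose proof (Cmod_ge_0 b).
  destruct (pow_eventually_lt q ((1 - q) / (2 * (Cmod b + 1)))%R Hq) as [N HN].
  { apply Rdiv_lt_0_compat; lra. }
  apply (Ccv_of_geom_rate _ _ q N (2 * Cmod b / (1 - q))%R Hq).
  intros n Hn. specialize (HN n Hn).
  assert (Hqn : (0 < q ^ n)%R) by (apply pow_lt; lra).
  eapply Rle_trans; [apply qpoch_inf_near_1; lra |].
  rewrite Cmod_mult, Cmod_R, Rabs_pos_eq by lra.
  assert (Hs : (Cmod b * q ^ n / (1 - q) <= 1/2)%R).
  { apply (Rmult_le_reg_r (1 - q)); [lra |]. unfold Rdiv.
    rewrite Rmult_assoc, Rinv_l, Rmult_1_r by lra.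
    apply Rmult_lt_compat_r with (r := (2 * (Cmod b + 1))%R) in HN; [| lra].
    unfold Rdiv in HN. rewrite Rmult_assoc, Rinv_l, Rmult_1_r in HN by lra. nra. }
  eapply Rle_trans; [apply exp_sub_1_le; split; [| exact Hs] |].
  - apply Rmult_le_pos; [nra | apply Rlt_le, Rinv_0_lt_compat; lra].
  - right. field. lra.
Qed.

Definition phi11_term (a b : C) (q : R) (Z : C) (k : nat) : C :=
  RtoC ((-1) ^ k * q ^ (k * (k - 1) / 2)) * qpoch a q k
    / (qpoch b q k * qpoch (RtoC q) q k) * pow_n Z k.

Definition phi11_term_ratio (a b : C) (q : R) (Z : C) (k : nat) : C :=
  RtoC (- q ^ k) * (1 - a * RtoC (q ^ k))
    * / ((1 - b * RtoC (q ^ k)) * (1 - RtoC q * RtoC (q ^ k))) * Z.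

Lemma triangular_S k : (S k * (S k - 1) / 2 = k * (k - 1) / 2 + k)%nat.
Proof.
  replace (S k * (S k - 1))%nat with (k * (k - 1) + k * 2)%nat.
  - apply Nat.div_add. lia.
  - destruct k; simpl; nia.
Qed.

Lemma pow_n_mult (w y : C) k : pow_n (w * y) k = (pow_n w k * pow_n y k : C).
Proof.
  induction k as [|k IH]; [change (@eq C 1 (1 * 1)); ring |].
  change (w * y * pow_n (w * y) k = w * pow_n w k * (y * pow_n y k)).
  rewrite IH. ring.
Qed.

Lemma pow_n_RtoC (q : R) k : pow_n (RtoC q) k = RtoC (q ^ k).
Proof.
  induction k as [|k IH]; [reflexivity |].
  change (RtoC q * pow_n (RtoC q) k = RtoC (q ^ S k)).
  rewrite IH, <- tech_pow_Rmult, RtoC_mult. reflexivity.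
Qed.

Lemma phi11_term_0 a b q Z : phi11_term a b q Z O = 1.
Proof.
  unfold phi11_term, qpoch. simpl. change (@one C_Ring) with (RtoC 1).
  rewrite Rmult_1_l. field.
Qed.

Lemma phi11_term_S a b q Z k :
  phi11_term a b q Z (S k) = phi11_term a b q Z k * phi11_term_ratio a b q Z k.
Proof.
  unfold phi11_term, phi11_term_ratio. rewrite triangular_S, !qpoch_S, pow_add.
  change (pow_n Z (S k)) with (Z * pow_n Z k).
  unfold Cdiv. rewrite !Cinv_mult_distr.
  replace ((-1) ^ S k)%R with (- (-1) ^ k)%R by (simpl; ring).
  rewrite !RtoC_mult, !RtoC_opp. ring.
Qed.

Lemma Cmod_phi11_term_ratio_le a b q Z k : (0 < q < 1)%R -> (Cmod b * q ^ k <= 1/2)%R ->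
  (Cmod (phi11_term_ratio a b q Z k) <= q ^ k * ((1 + Cmod a) * 4 / (1 - q) * Cmod Z))%R.
Proof.
  intros Hq Hb. unfold phi11_term_ratio.
  assert (Hqk : (0 < q ^ k)%R) by (apply pow_lt; lra).
  assert (Hqk1 : (q ^ k <= 1)%R) by (apply pow_le_1; lra).
  set (m1 := Cmod (1 - b * RtoC (q ^ k))). set (m2 := Cmod (1 - RtoC q * RtoC (q ^ k))).
  assert (D1 : (1/2 <= m1)%R).
  { eapply Rle_trans; [| apply Cmod_1_sub_ge]. rewrite Cmod_mult, Cmod_R, Rabs_pos_eq; lra. }
  assert (D2 : (1 - q <= m2)%R).
  { eapply Rle_trans; [| apply Cmod_1_sub_ge].
    rewrite Cmod_mult, !Cmod_R, !Rabs_pos_eq by lra. nra. }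
  assert (N1 : (Cmod (1 - a * RtoC (q ^ k)) <= 1 + Cmod a)%R).
  { eapply Rle_trans; [apply Cmod_triangle |].
    rewrite Cmod_opp, Cmod_1, Cmod_mult, Cmod_R, Rabs_pos_eq by lra.
    pose proof (Cmod_ge_0 a). nra. }
  assert (Hd : (1 - b * RtoC (q ^ k)) * (1 - RtoC q * RtoC (q ^ k)) <> 0).
  { apply Cmult_neq_0; intros E; [unfold m1 in D1 | unfold m2 in D2];
      rewrite E, Cmod_0 in *; lra. }
  rewrite !Cmod_mult, Cmod_inv by exact Hd.
  rewrite Cmod_mult, Cmod_R, Rabs_Ropp, Rabs_pos_eq by lra. fold m1 m2.
  assert (I1 : (/ (m1 * m2) <= 2 / (1 - q))%R).
  { replace (2 / (1 - q))%R with (/ ((1/2) * (1 - q)))%R by (field; lra).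
    apply Rinv_le_contravar; [apply Rmult_lt_0_compat |  apply Rmult_le_compat]; lra. }
  pose proof (Cmod_ge_0 Z). pose proof (Cmod_ge_0 (1 - a * RtoC (q ^ k))). pose proof (Cmod_ge_0 a).
  assert (0 <= / (m1 * m2))%R by (apply Rlt_le, Rinv_0_lt_compat, Rmult_lt_0_compat; lra).
  set (N := Cmod (1 - a * RtoC (q ^ k))) in *.
  assert (HND : (N * / (m1 * m2) <= (1 + Cmod a) * (2 / (1 - q)))%R)
    by (apply Rmult_le_compat; lra).
  assert (Hi : (0 < / (1 - q))%R) by (apply Rinv_0_lt_compat; lra).
  unfold Rdiv in *.
  replace (q ^ k * N * / (m1 * m2) * Cmod Z)%R with (q ^ k * Cmod Z * (N * / (m1 * m2)))%R by ring.
  replace (q ^ k * ((1 + Cmod a) * 4 * / (1 - q) * Cmod Z))%R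
    with (q ^ k * Cmod Z * ((1 + Cmod a) * (2 * / (1 - q)) * 2))%R by ring.
  apply Rmult_le_compat_l; [nra |].
  assert (0 <= (1 + Cmod a) * (2 * / (1 - q)))%R by nra. lra.
Qed.

Lemma phi11_is_series a b q Z : (0 < q < 1)%R ->
  Cis_series (phi11_term a b q Z) (phi11 a b q Z).
Proof.
  intros Hq.
  set (A := ((1 + Cmod a) * 4 / (1 - q) * Cmod Z)%R).
  assert (HA : (0 <= A)%R).
  { unfold A. pose proof (Cmod_ge_0 a). pose proof (Cmod_ge_0 Z).
    apply Rmult_le_pos; [| lra]. unfold Rdiv.
    apply Rmult_le_pos; [lra | apply Rlt_le, Rinv_0_lt_compat; lra]. }
  pose proof (Cmod_ge_0 b).
  destruct (pow_eventually_lt q (/ (2 * (Cmod b + A + 1)))%R Hq) as [K HK].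
  { apply Rinv_0_lt_compat. lra. }
  destruct (ex_Cseries_ratio (phi11_term a b q Z) K (1/2)%R) as [l Hl]; [lra | |].
  - intros k Hk. rewrite phi11_term_S, Cmod_mult, Rmult_comm.
    apply Rmult_le_compat_r; [apply Cmod_ge_0 |].
    specialize (HK k Hk).
    assert (Hqk : (0 < q ^ k)%R) by (apply pow_lt; lra).
    assert (Hm : (q ^ k * (Cmod b + A + 1) <= 1/2)%R).
    { apply Rmult_lt_compat_r with (r := (Cmod b + A + 1)%R) in HK; [| lra].
      rewrite Rinv_mult, Rmult_assoc, Rinv_l, Rmult_1_r in HK by lra. lra. }
    eapply Rle_trans; [apply Cmod_phi11_term_ratio_le; [exact Hq | nra] |]. fold A. nra.
  - change (phi11 a b q Z) with (Cseries (phi11_term a b q Z)).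
    rewrite (Cseries_of _ _ Hl). exact Hl.
Qed.

Lemma phi11_near_1 a b q Z : (0 < q < 1)%R -> (Cmod b <= 1/2)%R ->
  ((1 + Cmod a) * 4 / (1 - q) * Cmod Z <= 1/2)%R ->
  (Cmod (phi11 a b q Z - 1) <= 2 * ((1 + Cmod a) * 4 / (1 - q) * Cmod Z))%R.
Proof.
  intros Hq Hb HZ.
  set (A := ((1 + Cmod a) * 4 / (1 - q) * Cmod Z)%R) in *.
  assert (HA : (0 <= A)%R).
  { unfold A. pose proof (Cmod_ge_0 a). pose proof (Cmod_ge_0 Z).
    apply Rmult_le_pos; [| lra]. unfold Rdiv.
    apply Rmult_le_pos; [lra | apply Rlt_le, Rinv_0_lt_compat; lra]. }
  replace (phi11 a b q Z - 1) with (phi11 a b q Z - phi11_term a b q Z O)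
    by now rewrite phi11_term_0.
  eapply Rle_trans;
    [apply (Cmod_Cseries_ratio_sub_head_le _ A); [lra | | apply phi11_is_series, Hq] |].
  - intros k. rewrite phi11_term_S, Cmod_mult, Rmult_comm.
    apply Rmult_le_compat_r; [apply Cmod_ge_0 |].
    assert (Hqk : (0 < q ^ k <= 1)%R) by (split; [apply pow_lt | apply pow_le_1]; lra).
    eapply Rle_trans; [apply Cmod_phi11_term_ratio_le; [exact Hq | pose proof (Cmod_ge_0 b); nra] |].
    fold A. nra.
  - rewrite phi11_term_0, Cmod_1. apply Rmult_le_reg_r with (1 - A)%R; [lra |].
    unfold Rdiv. rewrite Rmult_assoc, Rinv_l by lra. nra.
Qed.

Section Contiguity.

Variables (a : C) (q : R) (z : C).
Hypothesis Hq : (0 < q < 1)%R.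

Let T (beta : C) : nat -> C := phi11_term a beta q (- beta * z).
Let Phi (beta : C) : C := phi11 a beta q (- beta * z).

(* Holds term by term, via [(b;q)_(m+1) = (1 - b) (bq;q)_m]; the two [z]-terms lag by one
   index, which [phi11_contiguous] absorbs by shifting their series. *)
Lemma phi11_term_contiguous b m : (forall j, 1 - b * RtoC (q ^ j) <> 0) ->
  (1 - b) * (1 - b * RtoC q) * T b (S m)
  = (1 - b * RtoC q) * (1 - b) * T (b * RtoC q) (S m)
    + (1 - b * RtoC q) * b * z * T (b * RtoC q) m
    - z * (a * b - RtoC q * b * b) * T (b * RtoC q * RtoC q) m.
Proof.
  intros Hb.
  assert (Hbq : forall j, 1 - b * RtoC q * RtoC (q ^ j) <> 0).
  { intros j. replace (b * RtoC q * RtoC (q ^ j)) with (b * RtoC (q ^ S j)); [apply Hb |].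
    rewrite <- tech_pow_Rmult, RtoC_mult. ring. }
  assert (H0 : 1 - b <> 0) by (pose proof (Hb 0%nat) as H; simpl in H; rewrite Cmult_1_r in H; exact H).
  assert (H1 : 1 - b * RtoC q <> 0) by (pose proof (Hb 1%nat) as H; simpl in H; rewrite Rmult_1_r in H; exact H).
  set (Y := qpoch (b * RtoC q) q m).
  assert (HY : Y <> 0) by (apply Cprod_neq0; exact Hbq).
  set (X := RtoC (q ^ m)).
  assert (EP : qpoch (b * RtoC q * RtoC q) q m = Y * (1 - b * RtoC q * X) / (1 - b * RtoC q)).
  { pose proof (qpoch_S_shift (b * RtoC q) q m) as E. rewrite qpoch_S in E. fold Y X in E.
    rewrite E. field. exact H1. }
  pose proof (qpoch_q_neq0 q m Hq) as HK.
  unfold T, phi11_term.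
  rewrite (qpoch_S_shift b q m), !qpoch_S. fold Y X. rewrite EP, triangular_S, pow_add.
  change (pow_n (- b * z) (S m)) with ((- b * z) * pow_n (- b * z) m).
  change (pow_n (- (b * RtoC q) * z) (S m))
    with ((- (b * RtoC q) * z) * pow_n (- (b * RtoC q) * z) m).
  replace (- (b * RtoC q) * z) with ((- b * z) * RtoC q) by ring.
  replace (- (b * RtoC q * RtoC q) * z) with ((- b * z) * RtoC q * RtoC q) by ring.
  rewrite !pow_n_mult, !pow_n_RtoC. fold X.
  replace ((-1) ^ S m)%R with (- (-1) ^ m)%R by (simpl; ring).
  rewrite !RtoC_mult, !RtoC_opp. fold X.
  assert (H2 : 1 - b * RtoC q * X <> 0) by apply Hbq.
  assert (H3 : 1 - RtoC q * X <> 0).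
  { intros E. apply (qpoch_q_neq0 q (S m) Hq). rewrite qpoch_S. fold X. rewrite E. ring. }
  field. repeat split; assumption.
Qed.

Lemma phi11_contiguous b : (forall j, 1 - b * RtoC (q ^ j) <> 0) ->
  (1 - b) * (1 - b * RtoC q) * Phi b
  = (1 - b * RtoC q) * (1 - b) * Phi (b * RtoC q)
    + (1 - b * RtoC q) * b * z * Phi (b * RtoC q)
    - z * (a * b - RtoC q * b * b) * Phi (b * RtoC q * RtoC q).
Proof.
  intros Hb.
  assert (HT : forall beta, Cis_series (T beta) (Phi beta))
    by (intros; apply phi11_is_series, Hq).
  apply (Cis_series_unique (fun n => (1 - b) * (1 - b * RtoC q) * T b n));
    [apply Cis_scal, HT |].
  set (c1 := (1 - b * RtoC q) * b * z). set (c2 := z * (a * b - RtoC q * b * b)).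
  pose proof (Cis_plus _ _ _ _ (Cis_scal ((1 - b * RtoC q) * (1 - b)) _ _ (HT (b * RtoC q)))
     (Cis_series_cons _ 0 _ (Cis_minus _ _ _ _ (Cis_scal c1 _ _ (HT (b * RtoC q)))
                                               (Cis_scal c2 _ _ (HT (b * RtoC q * RtoC q))))))
    as H.
  replace ((1 - b * RtoC q) * (1 - b) * Phi (b * RtoC q) + c1 * Phi (b * RtoC q)
           - c2 * Phi (b * RtoC q * RtoC q))
    with ((1 - b * RtoC q) * (1 - b) * Phi (b * RtoC q)
          + (0 + (c1 * Phi (b * RtoC q) - c2 * Phi (b * RtoC q * RtoC q)))) by ring.
  eapply is_series_ext; [| exact H]. intros [|m]; simpl.
  - unfold T. rewrite !phi11_term_0. ring.
  - rewrite (phi11_term_contiguous b m Hb). unfold c1, c2. ring.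
Qed.

End Contiguity.

Lemma phi11_geom_to_1 a (b : C) q z : (0 < q < 1)%R ->
  Ccv (fun n => phi11 a (b * RtoC (q ^ n)) q (- (b * RtoC (q ^ n)) * z)) 1.
Proof.
  intros Hq.
  set (A := ((1 + Cmod a) * 4 / (1 - q))%R).
  assert (HA : (0 <= A)%R).
  { unfold A. pose proof (Cmod_ge_0 a). unfold Rdiv.
    apply Rmult_le_pos; [lra | apply Rlt_le, Rinv_0_lt_compat; lra]. }
  pose proof (Cmod_ge_0 b) as Hb0. pose proof (Cmod_ge_0 z) as Hz0.
  assert (HAz : (0 <= A * Cmod z)%R) by (apply Rmult_le_pos; assumption).
  set (D := (2 * (Cmod b + 1) * (A * Cmod z + 1))%R).
  assert (HD : (0 < D)%R) by (unfold D; apply Rmult_lt_0_compat; lra).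
  destruct (pow_eventually_lt q (/ D) Hq (Rinv_0_lt_compat _ HD)) as [N HN].
  apply (Ccv_of_geom_rate _ _ q N (2 * (A * (Cmod b * Cmod z)))%R Hq).
  intros n Hn. specialize (HN n Hn).
  assert (Hqn : (0 < q ^ n)%R) by (apply pow_lt; lra).
  assert (Hsmall : (q ^ n * D < 1)%R).
  { apply Rmult_lt_compat_r with (r := D) in HN; [| exact HD].
    rewrite Rinv_l in HN by lra. exact HN. }
  assert (Hm : Cmod (b * RtoC (q ^ n)) = (Cmod b * q ^ n)%R)
    by (rewrite Cmod_mult, Cmod_R, Rabs_pos_eq; lra).
  assert (HZ : Cmod (- (b * RtoC (q ^ n)) * z) = (Cmod b * q ^ n * Cmod z)%R)
    by (rewrite Cmod_mult, Cmod_opp, Hm; reflexivity).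
  unfold D in Hsmall.
  assert (0 <= q ^ n * Cmod b * (A * Cmod z))%R by (apply Rmult_le_pos; nra).
  eapply Rle_trans; [apply phi11_near_1; [exact Hq | rewrite Hm; nra | fold A; rewrite HZ; nra] |].
  fold A. rewrite HZ. right. ring.
Qed.

(* Since [1 - r^(m+1) = (1 - r)(1 + r + ... + r^m)] and each [r^i >= r^m]. *)
Lemma succ_mul_one_sub_pow_le r m : (0 <= r <= 1)%R ->
  (INR (S m) * (1 - r) * r ^ m <= 1 - r ^ S m)%R.
Proof.
  intros Hr. induction m as [|m IH]; [simpl; lra |].
  rewrite (S_INR (S m)). rewrite <- !tech_pow_Rmult in *.
  set (p := (r * r ^ m)%R) in *. set (N := INR (S m)) in *.
  assert (Hp : (0 <= p <= 1)%R).
  { unfold p. rewrite tech_pow_Rmult. split; [apply pow_le; lra | apply pow_le_1; lra]. }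
  assert (A1 : (r * (N * (1 - r) * r ^ m) <= r * (1 - p))%R) by (apply Rmult_le_compat_l; lra).
  replace ((N + 1) * (1 - r) * p)%R with (r * (N * (1 - r) * r ^ m) + (1 - r) * p)%R
    by (unfold p; ring).
  assert (A2 : (0 <= (1 - r) * (1 - p))%R) by (apply Rmult_le_pos; lra).
  nra.
Qed.

Definition Gnest_term (x : nat -> C) m j i : C :=
  x (j + i)%nat * x (j + i + 1)%nat * Gnest x m (j + i + 2)%nat.

Definition Gnest_bound (C0 r : R) m j : R :=
  ((C0 / (1 - r) * r ^ j) ^ m / INR (Factorial.fact m))%R.

Lemma Gnest_bound_add2_le C0 r m k : (0 < r < 1)%R -> (0 <= C0)%R ->
  (Gnest_bound C0 r m (k + 2) <= r ^ m * Gnest_bound C0 r m k)%R.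
Proof.
  intros Hr HC0. unfold Gnest_bound.
  set (tau := (C0 / (1 - r))%R).
  assert (Htau : (0 <= tau)%R).
  { unfold tau. apply Rmult_le_pos; [lra | apply Rlt_le, Rinv_0_lt_compat; lra]. }
  pose proof (INR_fact_lt_0 m) as Hf. unfold Rdiv.
  rewrite <- Rmult_assoc, <- Rpow_mult_distr.
  apply Rmult_le_compat_r; [apply Rlt_le, Rinv_0_lt_compat, Hf |].
  apply pow_incr. split; [apply Rmult_le_pos; [exact Htau | apply pow_le; lra] |].
  rewrite Nat.add_comm. simpl.
  assert (0 <= r ^ k)%R by (apply pow_le; lra).
  replace (r * (tau * r ^ k))%R with (tau * (r * r ^ k))%R by ring.
  apply Rmult_le_compat_l; [exact Htau |].
  apply Rmult_le_compat_l; [lra | nra].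
Qed.

(* With [B = tau r^(j+i)] both sides are multiples of [B^(m+1) / (m+1)!], and comparing
   the coefficients is [succ_mul_one_sub_pow_le]. *)
Lemma Gnest_term_bound_real C0 r j i m (g : R) : (0 < r < 1)%R -> (0 <= C0)%R ->
  (0 <= g <= Gnest_bound C0 r m (j + i + 2))%R ->
  (C0 * r ^ (j + i) * g <= (1 - r ^ S m) * Gnest_bound C0 r (S m) j * (r ^ S m) ^ i)%R.
Proof.
  intros Hr HC0 Hg.
  pose proof (Gnest_bound_add2_le C0 r m (j + i) Hr HC0) as Hshift.
  unfold Gnest_bound in *.
  set (tau := (C0 / (1 - r))%R) in *.
  assert (Htau : (0 <= tau)%R).
  { unfold tau. apply Rmult_le_pos; [lra | apply Rlt_le, Rinv_0_lt_compat; lra]. }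
  set (B := (tau * r ^ (j + i))%R) in *.
  assert (HB : (0 <= B)%R) by (unfold B; apply Rmult_le_pos; [lra | apply pow_le; lra]).
  assert (E1 : ((tau * r ^ j) ^ S m * (r ^ S m) ^ i = B ^ S m)%R).
  { unfold B. rewrite <- pow_mult, Nat.mul_comm, pow_mult, <- Rpow_mult_distr, pow_add.
    f_equal; ring. }
  assert (E2 : (C0 * r ^ (j + i) = (1 - r) * B)%R) by (unfold B, tau; field; lra).
  pose proof (INR_fact_lt_0 m) as Hf.
  assert (HSm : (0 < INR (S m))%R) by (apply lt_0_INR; lia).
  rewrite fact_simpl, mult_INR.
  replace ((1 - r ^ S m) * ((tau * r ^ j) ^ S m / (INR (S m) * INR (Factorial.fact m)))
           * (r ^ S m) ^ i)%R
    with ((1 - r ^ S m) * (B ^ S m / (INR (S m) * INR (Factorial.fact m))))%R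
    by (rewrite <- E1; field; split; lra).
  rewrite E2.
  pose proof (succ_mul_one_sub_pow_le r m ltac:(lra)) as K.
  assert (HBm : (0 <= B ^ S m / (INR (S m) * INR (Factorial.fact m)))%R).
  { apply Rmult_le_pos; [apply pow_le, HB |].
    apply Rlt_le, Rinv_0_lt_compat, Rmult_lt_0_compat; assumption. }
  apply Rle_trans with ((1 - r) * B * (r ^ m * (B ^ m / INR (Factorial.fact m))))%R.
  - apply Rmult_le_compat_l; [apply Rmult_le_pos |]; lra.
  - replace ((1 - r) * B * (r ^ m * (B ^ m / INR (Factorial.fact m))))%R with
      ((INR (S m) * (1 - r) * r ^ m) * (B ^ S m / (INR (S m) * INR (Factorial.fact m))))%R
      by (change (B ^ S m)%R with (B * B ^ m)%R; field; split; lra).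
    apply Rmult_le_compat_r; assumption.
Qed.

Definition frakF_from (x : nat -> C) (j : nat) : C :=
  1 + Cseries (fun m => RtoC ((-1) ^ S m) * Gnest x (S m) j).

Section FrakFRecurrence.

Variables (x : nat -> C) (C0 r : R).
Hypothesis Hr : (0 < r < 1)%R.
Hypothesis HC0 : (0 <= C0)%R.
Hypothesis Hx : forall k, (Cmod (x k * x (k + 1)%nat) <= C0 * r ^ k)%R.

Lemma Gnest_is_series_bound m :
  (forall j, Cmod (Gnest x m j) <= Gnest_bound C0 r m j)%R ->
  forall j, Cis_series (Gnest_term x m j) (Gnest x (S m) j)
            /\ (Cmod (Gnest x (S m) j) <= Gnest_bound C0 r (S m) j)%R.
Proof.
  intros IH j.
  set (D := ((1 - r ^ S m) * Gnest_bound C0 r (S m) j)%R).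
  assert (Hb : forall i, (Cmod (Gnest_term x m j i) <= D * (r ^ S m) ^ i)%R).
  { intros i. unfold Gnest_term. rewrite Cmod_mult.
    apply Rle_trans with (C0 * r ^ (j + i) * Cmod (Gnest x m (j + i + 2)))%R.
    - apply Rmult_le_compat_r; [apply Cmod_ge_0 | apply Hx].
    - apply Gnest_term_bound_real; [exact Hr | exact HC0 | split; [apply Cmod_ge_0 | apply IH]]. }
  assert (Hrm : (0 <= r ^ S m < 1)%R).
  { split; [apply pow_le; lra |]. rewrite <- tech_pow_Rmult.
    pose proof (pow_le_1 r m ltac:(lra)). pose proof (pow_le r m ltac:(lra)). nra. }
  destruct (ex_Cseries_geom_dom _ D (r ^ S m) Hrm Hb) as [l Hl].
  change (Gnest x (S m) j) with (Cseries (Gnest_term x m j)).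
  rewrite (Cseries_of _ _ Hl). split; [exact Hl |].
  eapply Rle_trans; [apply (Cmod_Cseries_geom_dom_le _ D (r ^ S m) Hrm Hb l Hl) |].
  right. unfold D. field. lra.
Qed.

Lemma Gnest_bounded m j : (Cmod (Gnest x m j) <= Gnest_bound C0 r m j)%R.
Proof.
  revert j. induction m as [|m IH]; intros j.
  - unfold Gnest_bound. simpl. rewrite Cmod_1. lra.
  - apply (Gnest_is_series_bound m IH j).
Qed.

Lemma Gnest_is_series m j : Cis_series (Gnest_term x m j) (Gnest x (S m) j).
Proof. apply (Gnest_is_series_bound m (Gnest_bounded m)). Qed.

Lemma Gnest_S_split m j :
  Gnest x (S m) j = x j * x (j + 1)%nat * Gnest x m (j + 2)%nat + Gnest x (S m) (S j).
Proof.
  assert (E : Gnest x (S m) (S j) = Gnest x (S m) j - Gnest_term x m j O).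
  { apply (Cis_series_unique (Gnest_term x m (S j))); [apply Gnest_is_series |].
    eapply is_series_ext; [| exact (Cis_series_tail _ _ (Gnest_is_series m j))].
    intros i. unfold Gnest_term. rewrite <- plus_n_Sm. reflexivity. }
  rewrite E. unfold Gnest_term. rewrite !Nat.add_0_r. ring.
Qed.

Lemma frakF_from_sub_1_is_series j :
  Cis_series (fun m => RtoC ((-1) ^ S m) * Gnest x (S m) j) (frakF_from x j - 1).
Proof.
  set (X := (C0 / (1 - r) * r ^ j)%R).
  assert (Hex : ex_series (fun m => Gnest_bound C0 r (S m) j)).
  { assert (H : ex_series (fun k => scal (pow_n X k) (/ INR (Factorial.fact k)))%R)
      by (eexists; exact (is_exp_Reals X)).
    apply ex_series_incr_1 in H. eapply ex_series_ext; [| exact H].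
    intros m. unfold Gnest_bound. fold X. rewrite pow_n_pow. reflexivity. }
  destruct (ex_series_le (K:=C_AbsRing) (V:=C_CompleteNormedModule)
              (fun m => RtoC ((-1) ^ S m) * Gnest x (S m) j)
              (fun m => Gnest_bound C0 r (S m) j)) as [l Hl]; [| exact Hex |].
  { intros m. change (Cmod (RtoC ((-1) ^ S m) * Gnest x (S m) j) <= Gnest_bound C0 r (S m) j)%R.
    rewrite Cmod_sign_mult. apply Gnest_bounded. }
  unfold frakF_from. rewrite (Cseries_of _ _ Hl).
  rewrite Cadd_sub_l. exact Hl.
Qed.

Lemma frakF_from_is_series j :
  Cis_series (fun m => RtoC ((-1) ^ m) * Gnest x m j) (frakF_from x j).
Proof.
  replace (frakF_from x j) with (RtoC ((-1) ^ 0) * Gnest x 0 j + (frakF_from x j - 1))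
    by (simpl; ring).
  eapply is_series_ext; [| exact (Cis_series_cons _ _ _ (frakF_from_sub_1_is_series j))].
  intros [|m]; reflexivity.
Qed.

Lemma frakF_from_recurrence j :
  frakF_from x j = frakF_from x (S j) - x j * x (j + 1)%nat * frakF_from x (j + 2)%nat.
Proof.
  apply (Cis_series_unique (fun m => RtoC ((-1) ^ m) * Gnest x m j));
    [apply frakF_from_is_series |].
  pose proof (Cis_series_cons _ 0 _ (Cis_scal (- (x j * x (j + 1)%nat)) _ _
                                        (frakF_from_is_series (j + 2)))) as H.
  pose proof (Cis_plus _ _ _ _ (frakF_from_is_series (S j)) H) as H'.
  replace (frakF_from x (S j) - x j * x (j + 1)%nat * frakF_from x (j + 2))
    with (frakF_from x (S j) + (0 + - (x j * x (j + 1)%nat) * frakF_from x (j + 2))) by ring.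
  eapply is_series_ext; [| exact H']. intros [|m]; [simpl; apply Cplus_0_r |].
  cbv beta iota. rewrite (Gnest_S_split m j), <- tech_pow_Rmult, RtoC_mult.
  match goal with |- ?u = ?v => change (@eq C u v) end. ring.
Qed.

Lemma frakF_from_near_1 j : (C0 / (1 - r) * r ^ j <= 1/2)%R ->
  (Cmod (frakF_from x j - 1) <= 2 * (C0 / (1 - r) * r ^ j))%R.
Proof.
  intros HX. set (X := (C0 / (1 - r) * r ^ j)%R) in *.
  assert (HX0 : (0 <= X)%R).
  { unfold X. apply Rmult_le_pos; [| apply pow_le; lra].
    apply Rmult_le_pos; [lra | apply Rlt_le, Rinv_0_lt_compat; lra]. }
  eapply Rle_trans;
    [apply (Cmod_Cseries_geom_dom_le (fun m => RtoC ((-1) ^ S m) * Gnest x (S m) j) X X);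
       [lra | | apply frakF_from_sub_1_is_series] |].
  - intros m. rewrite Cmod_sign_mult.
    eapply Rle_trans; [apply Gnest_bounded |]. unfold Gnest_bound. fold X.
    assert (H1 : (1 <= INR (Factorial.fact (S m)))%R).
    { apply (le_INR 1). pose proof (Factorial.lt_O_fact (S m)). lia. }
    assert (HXm : (0 <= X ^ S m)%R) by (apply pow_le; exact HX0).
    unfold Rdiv. rewrite <- (Rmult_1_r (X * X ^ m)).
    apply Rmult_le_compat; [exact HXm | apply Rlt_le, Rinv_0_lt_compat; lra | simpl; lra |].
    rewrite <- Rinv_1. apply Rinv_le_contravar; lra.
  - apply Rmult_le_reg_r with (1 - X)%R; [lra |].
    unfold Rdiv. rewrite Rmult_assoc, Rinv_l by lra. nra.
Qed.

Lemma frakF_from_cv : Ccv (frakF_from x) 1.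
Proof.
  set (tau := (C0 / (1 - r))%R).
  assert (Ht : (0 <= tau)%R).
  { unfold tau. apply Rmult_le_pos; [lra | apply Rlt_le, Rinv_0_lt_compat; lra]. }
  destruct (pow_eventually_lt r (/ (2 * (tau + 1)))%R Hr) as [N HN].
  { apply Rinv_0_lt_compat. lra. }
  apply (Ccv_of_geom_rate _ _ r N (2 * tau)%R Hr). intros n Hn.
  rewrite Rmult_assoc. apply frakF_from_near_1. fold tau.
  specialize (HN n Hn). assert (0 <= r ^ n)%R by (apply pow_le; lra).
  apply Rmult_lt_compat_r with (r := (2 * (tau + 1))%R) in HN; [| lra].
  rewrite Rinv_l in HN by lra. nra.
Qed.

End FrakFRecurrence.

Lemma geom_bound_of_eventual (y : nat -> C) r N K : (0 < r)%R ->
  (forall k, (N <= k)%nat -> (Cmod (y k) <= K * r ^ k)%R) ->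
  exists C0, (0 <= C0)%R /\ forall k, (Cmod (y k) <= C0 * r ^ k)%R.
Proof.
  revert K. induction N as [|N IH]; intros K Hr H.
  - exists (Rmax K 0). split; [apply Rmax_r |]. intros k.
    eapply Rle_trans; [apply H; lia |].
    apply Rmult_le_compat_r; [apply pow_le; lra | apply Rmax_l].
  - apply (IH (Rmax K 0 + Cmod (y N) / r ^ N)%R Hr). intros k Hk.
    assert (HrN : (0 < r ^ N)%R) by (apply pow_lt; lra).
    assert (Hrk : (0 < r ^ k)%R) by (apply pow_lt; lra).
    assert (0 <= Cmod (y N) / r ^ N)%R
      by (apply Rmult_le_pos; [apply Cmod_ge_0 | apply Rlt_le, Rinv_0_lt_compat, HrN]).
    pose proof (Rmax_l K 0). pose proof (Rmax_r K 0).
    destruct (Nat.eq_dec k N) as [-> | Hne].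
    + replace (Cmod (y N)) with (Cmod (y N) / r ^ N * r ^ N)%R at 1 by (field; lra). nra.
    + eapply Rle_trans; [apply H; lia |]. apply Rmult_le_compat_r; lra.
Qed.

Lemma casoratian_eventually_zero (W y : nat -> C) J :
  (forall j, (J <= j)%nat -> W j = y j * W (S j)) ->
  (forall j, (J <= j)%nat -> (Cmod (y j) <= 1)%R) ->
  Ccv W 0 -> forall j, (J <= j)%nat -> W j = 0.
Proof.
  intros HW Hy HWc j Hj.
  assert (Hmono : forall n, (Cmod (W j) <= Cmod (W (j + n)%nat))%R).
  { induction n as [|n IH]; [rewrite Nat.add_0_r; lra |].
    eapply Rle_trans; [exact IH |].
    rewrite (HW (j + n)%nat) by lia. rewrite Cmod_mult, <- plus_n_Sm.
    pose proof (Hy (j + n)%nat ltac:(lia)). pose proof (Cmod_ge_0 (W (S (j + n)))). nra. }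
  apply Cmod_eq_0, Rle_antisym; [| apply Cmod_ge_0].
  apply Rnot_lt_le. intros Hlt. rewrite Ccv_Cmod in HWc.
  destruct (HWc (Cmod (W j)) Hlt) as [M HM].
  specialize (HM (j + M)%nat ltac:(lia)). rewrite Cminus_0 in HM.
  specialize (Hmono M). lra.
Qed.

Lemma eq_of_casoratian_zero (F psi : nat -> C) J :
  (forall k, (J <= k)%nat -> F k <> 0) ->
  (forall k, (J <= k)%nat -> F k * psi (S k) = F (S k) * psi k) ->
  Ccv F 1 -> Ccv psi 1 -> forall k, (J <= k)%nat -> psi k = F k.
Proof.
  intros HF HW HFc Hpc.
  set (lam := psi J / F J).
  assert (Hlam : forall k, psi (J + k)%nat = lam * F (J + k)%nat).
  { induction k as [|k IH]; [rewrite Nat.add_0_r; unfold lam; field; apply HF; lia |].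
    rewrite <- plus_n_Sm.
    assert (HFk : F (J + k)%nat <> 0) by (apply HF; lia).
    replace (psi (S (J + k))) with (/ F (J + k)%nat * (F (J + k)%nat * psi (S (J + k))))
      by (field; exact HFk).
    rewrite HW, IH by lia. field. exact HFk. }
  assert (Hl1 : lam = 1).
  { apply (Ccv_unique (fun k => psi (J + k)%nat)); [| apply Ccv_shift, Hpc].
    rewrite <- (Cmult_1_r lam).
    apply (Ccv_ext (fun k => lam * F (J + k)%nat)); [intros k; symmetry; apply Hlam |].
    apply Ccv_mult; [apply Ccv_const | apply Ccv_shift, HFc]. }
  intros k Hk. replace k with (J + (k - J))%nat by lia. rewrite Hlam, Hl1. ring.
Qed.

Lemma three_term_backward_eq (u v c : nat -> C) J :
  (forall j, (1 <= j)%nat -> u j = u (S j) - c j * u (j + 2)%nat) ->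
  (forall j, (1 <= j)%nat -> v j = v (S j) - c j * v (j + 2)%nat) ->
  (1 <= J)%nat -> u J = v J -> u (S J) = v (S J) -> u 1%nat = v 1%nat.
Proof.
  intros Hu Hv HJ E0 E1.
  assert (H : forall d, (d < J)%nat -> u (J - d)%nat = v (J - d)%nat /\ u (S (J - d)) = v (S (J - d))).
  { induction d as [|d IH]; intros Hd; [rewrite Nat.sub_0_r; split; assumption |].
    destruct (IH ltac:(lia)) as [IH1 IH2].
    replace (S (J - S d)) with (J - d)%nat by lia. split; [| exact IH1].
    rewrite (Hu (J - S d)%nat), (Hv (J - S d)%nat) by lia.
    replace (S (J - S d)) with (J - d)%nat by lia.
    replace (J - S d + 2)%nat with (S (J - d)) by lia.
    rewrite IH1, IH2. reflexivity. }
  destruct (H (J - 1)%nat ltac:(lia)) as [H1 _].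
  replace (J - (J - 1))%nat with 1%nat in H1 by lia. exact H1.
Qed.

(* The Casoratian [W j] satisfies [W j = x j x (j+1) W (S j)] and tends to [0], so it vanishes
   as soon as [|x j x (j+1)| <= 1]. *)
Theorem frakF_eq_of_recurrence (x psi : nat -> C) r N K : (0 < r < 1)%R ->
  (forall k, (N <= k)%nat -> (Cmod (x k * x (k + 1)%nat) <= K * r ^ k)%R) ->
  (forall j, (1 <= j)%nat -> psi j = psi (S j) - x j * x (j + 1)%nat * psi (j + 2)%nat) ->
  Ccv psi 1 -> frakF x = psi 1%nat.
Proof.
  intros Hr HxN Hpsi Hpc.
  destruct (geom_bound_of_eventual (fun k => x k * x (k + 1)%nat) r N K ltac:(lra) HxN)
    as [C0 [HC0 Hx]].
  set (F := frakF_from x).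
  assert (HFc : Ccv F 1) by exact (frakF_from_cv x C0 r Hr HC0 Hx).
  assert (HFrec : forall j, F j = F (S j) - x j * x (j + 1)%nat * F (j + 2)%nat)
    by exact (frakF_from_recurrence x C0 r Hr HC0 Hx).
  destruct (pow_eventually_lt r (/ (C0 + 1))%R Hr) as [N1 HN1].
  { apply Rinv_0_lt_compat. lra. }
  destruct (proj1 (Ccv_Cmod F 1) HFc (1/2)%R ltac:(lra)) as [N2 HN2].
  set (J := (N1 + N2 + 1)%nat).
  assert (Hsmall : forall k, (J <= k)%nat -> (Cmod (x k * x (k + 1)%nat) <= 1)%R).
  { intros k Hk. eapply Rle_trans; [apply Hx |].
    specialize (HN1 k ltac:(lia)). pose proof (pow_le r k ltac:(lra)).
    apply Rmult_lt_compat_r with (r := (C0 + 1)%R) in HN1; [| lra].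
    rewrite Rinv_l in HN1 by lra. nra. }
  assert (HF0 : forall k, (J <= k)%nat -> F k <> 0).
  { intros k Hk E. specialize (HN2 k ltac:(lia)). rewrite E in HN2.
    replace (0 - 1) with (- (1)) in HN2 by ring. rewrite Cmod_opp, Cmod_1 in HN2. lra. }
  set (W := fun j => F j * psi (S j) - F (S j) * psi j).
  assert (HW0 : forall j, (J <= j)%nat -> W j = 0).
  { apply (casoratian_eventually_zero W (fun j => x j * x (j + 1)%nat) J); [| exact Hsmall |].
    - intros j Hj. unfold W. rewrite (HFrec j), (Hpsi j) by lia.
      replace (j + 2)%nat with (S (S j)) by lia. ring.
    - replace (RtoC 0) with (1 * 1 - 1 * 1) by ring.
      apply Ccv_minus; apply Ccv_mult; try assumption; apply (Ccv_shift _ _ 1); assumption. }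
  assert (Heq : forall k, (J <= k)%nat -> psi k = F k).
  { apply (eq_of_casoratian_zero F psi J HF0); [| exact HFc | exact Hpc].
    intros k Hk. pose proof (HW0 k Hk) as E. unfold W in E.
    replace (F k * psi (S k)) with (F k * psi (S k) - F (S k) * psi k + F (S k) * psi k)
      by ring.
    rewrite E. ring. }
  change (frakF x) with (F 1%nat).
  apply (three_term_backward_eq F psi (fun j => x j * x (j + 1)%nat) J);
    [intros; apply HFrec | exact Hpsi | lia | symmetry; apply Heq; lia | symmetry; apply Heq; lia].
Qed.

(* [qpoch_phi11] and [contiguity_coeff] are the functions R and Y of the header. *)
Definition qpoch_phi11 (a : C) (q : R) (z beta : C) : C :=
  qpoch_inf beta q / qpoch_inf ((1 - z) * beta) q * phi11 a beta q (- beta * z).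

Definition contiguity_coeff (a : C) (q : R) (z beta : C) : C :=
  z * (a * beta - RtoC q * beta * beta)
    / ((1 - (1 - z) * beta) * (1 - (1 - z) * (beta * RtoC q))).

Lemma qpoch_phi11_recurrence a q z beta : (0 < q < 1)%R ->
  (forall j, 1 - beta * RtoC (q ^ j) <> 0) -> qpoch_inf ((1 - z) * beta) q <> 0 ->
  qpoch_phi11 a q z beta = qpoch_phi11 a q z (beta * RtoC q)
    - contiguity_coeff a q z beta * qpoch_phi11 a q z (beta * RtoC q * RtoC q).
Proof.
  intros Hq Hb HP. assert (Hq' : (0 <= q < 1)%R) by lra.
  set (c := 1 - z) in *.
  pose proof (qpoch_inf_shift beta q Hq') as Ea.
  pose proof (qpoch_inf_shift (beta * RtoC q) q Hq') as Eb.
  pose proof (qpoch_inf_shift (c * beta) q Hq') as Ec.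
  pose proof (qpoch_inf_shift (c * (beta * RtoC q)) q Hq') as Ed.
  replace (c * beta * RtoC q) with (c * (beta * RtoC q)) in Ec by ring.
  replace (c * (beta * RtoC q) * RtoC q) with (c * (beta * RtoC q * RtoC q)) in Ed by ring.
  rewrite Ec in HP. rewrite Ed in HP.
  assert (N1 : 1 - c * beta <> 0) by (intros E; apply HP; rewrite E; ring).
  assert (N2 : 1 - c * (beta * RtoC q) <> 0) by (intros E; apply HP; rewrite E; ring).
  assert (N3 : qpoch_inf (c * (beta * RtoC q * RtoC q)) q <> 0)
    by (intros E; apply HP; rewrite E; ring).
  assert (H0 : 1 - beta <> 0) by (pose proof (Hb 0%nat) as H; simpl in H; rewrite Cmult_1_r in H; exact H).
  assert (H1 : 1 - beta * RtoC q <> 0) by (pose proof (Hb 1%nat) as H; simpl in H; rewrite Rmult_1_r in H; exact H).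
  pose proof (phi11_contiguous a q z Hq beta Hb) as Ct.
  unfold qpoch_phi11, contiguity_coeff. fold c.
  rewrite Ea, Ec, !Eb, !Ed.
  set (p0 := phi11 a beta q (- beta * z)) in *.
  set (p1 := phi11 a (beta * RtoC q) q (- (beta * RtoC q) * z)) in *.
  set (p2 := phi11 a (beta * RtoC q * RtoC q) q (- (beta * RtoC q * RtoC q) * z)) in *.
  assert (Ep : p0 = ((1 - beta * RtoC q) * (1 - beta) * p1 + (1 - beta * RtoC q) * beta * z * p1
      - z * (a * beta - RtoC q * beta * beta) * p2) / ((1 - beta) * (1 - beta * RtoC q)))
    by (rewrite <- Ct; field; auto).
  rewrite Ep. unfold c in *. field. repeat split; auto.
Qed.

Lemma qpoch_phi11_geom_to_1 a q z b : (0 < q < 1)%R ->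
  Ccv (fun n => qpoch_phi11 a q z (b * RtoC (q ^ n))) 1.
Proof.
  intros Hq.
  apply (Ccv_ext (fun n => qpoch_inf (b * RtoC (q ^ n)) q
                           * / qpoch_inf ((1 - z) * b * RtoC (q ^ n)) q
                           * phi11 a (b * RtoC (q ^ n)) q (- (b * RtoC (q ^ n)) * z))).
  { intros n. unfold qpoch_phi11, Cdiv. do 4 f_equal. ring. }
  replace (RtoC 1) with (1 * / 1 * 1) by field.
  apply Ccv_mult; [apply Ccv_mult |].
  - apply qpoch_inf_geom_to_1, Hq.
  - apply Ccv_inv; [apply qpoch_inf_geom_to_1, Hq |].
    intros E. apply (f_equal fst) in E. simpl in E. lra.
  - apply phi11_geom_to_1, Hq.
Qed.

Lemma Cmod_contiguity_coeff_le a q z beta : (0 < q < 1)%R ->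
  (Cmod (1 - z) * Cmod beta <= 1/2)%R ->
  (Cmod (contiguity_coeff a q z beta) <= 4 * Cmod z * (Cmod a + Cmod beta) * Cmod beta)%R.
Proof.
  intros Hq Hsm. set (c := 1 - z) in *.
  pose proof (Cmod_ge_0 c). pose proof (Cmod_ge_0 beta). pose proof (Cmod_ge_0 a).
  pose proof (Cmod_ge_0 z).
  set (m1 := Cmod (1 - c * beta)). set (m2 := Cmod (1 - c * (beta * RtoC q))).
  assert (D1 : (1/2 <= m1)%R).
  { eapply Rle_trans; [| apply Cmod_1_sub_ge]. rewrite Cmod_mult. lra. }
  assert (D2 : (1/2 <= m2)%R).
  { eapply Rle_trans; [| apply Cmod_1_sub_ge].
    rewrite !Cmod_mult, Cmod_R, Rabs_pos_eq by lra. nra. }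
  assert (Hd : (1 - c * beta) * (1 - c * (beta * RtoC q)) <> 0).
  { apply Cmult_neq_0; intros E; [unfold m1 in D1 | unfold m2 in D2];
      rewrite E, Cmod_0 in *; lra. }
  assert (Hnum : (Cmod (a * beta - RtoC q * beta * beta) <= (Cmod a + Cmod beta) * Cmod beta)%R).
  { eapply Rle_trans; [apply Cmod_triangle |].
    rewrite Cmod_opp, !Cmod_mult, Cmod_R, Rabs_pos_eq by lra. nra. }
  assert (I1 : (/ (m1 * m2) <= 4)%R).
  { replace 4%R with (/ ((1/2) * (1/2)))%R by field.
    apply Rinv_le_contravar; [apply Rmult_lt_0_compat | apply Rmult_le_compat]; lra. }
  unfold contiguity_coeff. fold c. rewrite Cmod_div, !Cmod_mult by exact Hd. fold m1 m2.
  assert (0 <= / (m1 * m2))%R by (apply Rlt_le, Rinv_0_lt_compat, Rmult_lt_0_compat; lra).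
  pose proof (Cmod_ge_0 (a * beta - RtoC q * beta * beta)).
  unfold Rdiv. apply Rle_trans with (Cmod z * ((Cmod a + Cmod beta) * Cmod beta) * 4)%R.
  - apply Rmult_le_compat; [nra | assumption | apply Rmult_le_compat_l |]; assumption.
  - right. ring.
Qed.

Lemma contiguity_coeff_geom_bound a q z b : (0 < q < 1)%R ->
  exists N K, forall n, (N <= n)%nat ->
    (Cmod (contiguity_coeff a q z (b * RtoC (q ^ n))) <= K * q ^ n)%R.
Proof.
  intros Hq. pose proof (Cmod_ge_0 (1 - z)). pose proof (Cmod_ge_0 b).
  pose proof (Cmod_ge_0 a). pose proof (Cmod_ge_0 z).
  destruct (pow_eventually_lt q (/ (2 * (Cmod (1 - z) * Cmod b + 1)))%R Hq) as [N HN].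
  { apply Rinv_0_lt_compat. nra. }
  exists N, (4 * Cmod z * (Cmod a + Cmod b) * Cmod b)%R. intros n Hn.
  specialize (HN n Hn).
  assert (Hqn : (0 < q ^ n <= 1)%R) by (split; [apply pow_lt | apply pow_le_1]; lra).
  assert (HB : Cmod (b * RtoC (q ^ n)) = (Cmod b * q ^ n)%R)
    by (rewrite Cmod_mult, Cmod_R, Rabs_pos_eq; lra).
  eapply Rle_trans; [apply Cmod_contiguity_coeff_le; [exact Hq |] |]; rewrite HB.
  - apply Rmult_lt_compat_r with (r := (2 * (Cmod (1 - z) * Cmod b + 1))%R) in HN; [| nra].
    rewrite Rinv_l in HN by (apply Rgt_not_eq; nra).
    replace (q ^ n * (2 * (Cmod (1 - z) * Cmod b + 1)))%R
      with (2 * (Cmod (1 - z) * (Cmod b * q ^ n)) + 2 * q ^ n)%R in HN by ring. lra.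
  - assert (Hbn : (0 <= Cmod b * q ^ n <= Cmod b)%R) by (split; nra).
    replace (4 * Cmod z * (Cmod a + Cmod b) * Cmod b * q ^ n)%R
      with (4 * Cmod z * (Cmod a + Cmod b) * (Cmod b * q ^ n))%R by ring.
    apply Rmult_le_compat_r; [lra |]. apply Rmult_le_compat_l; lra.
Qed.

Definition xseq (q : R) (alpha gamma z w : C) (k : nat) : C :=
  qpow q ((alpha + gamma + INR k) / 2 - RtoC (3 / 4))
  * qpoch_inf (qpow q (gamma - alpha + INR k)) (q ^ 2) * w
  / (qpoch_inf (qpow q (gamma - alpha + INR k + 1)) (q ^ 2)
     * (1 - (1 - z) * qpow q (gamma + INR k - 1))).

(* The q^2-Pochhammer factors telescope, and the prefactors multiply to q^(alpha + gamma + n). *)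
Lemma xseq_adjacent_product q alpha gamma z w : (0 < q < 1)%R -> w * w = z ->
  (forall k : nat, (1 <= k)%nat -> qpoch_inf (qpow q (gamma - alpha + INR k + 1)) (q ^ 2) <> 0) ->
  (forall k : nat, (1 <= k)%nat -> 1 - (1 - z) * qpow q (gamma + INR k - 1) <> 0) ->
  forall n, xseq q alpha gamma z w (S n) * xseq q alpha gamma z w (S n + 1)%nat
            = contiguity_coeff (qpow q alpha) q z (qpow q gamma * RtoC (q ^ n)).
Proof.
  intros Hq Hw HM HD n. assert (Hq0 : (0 < q)%R) by lra.
  set (a := qpow q alpha). set (beta := qpow q gamma * RtoC (q ^ n)).
  assert (Ek1 : RtoC (INR (S n + 1)) = INR n + 1 + 1)
    by (rewrite plus_INR, S_INR, !RtoC_plus; reflexivity).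
  assert (Ek : RtoC (INR (S n)) = INR n + 1) by (rewrite S_INR, RtoC_plus; reflexivity).
  assert (Eb1 : qpow q (gamma + INR (S n) - 1) = beta).
  { unfold beta. rewrite <- qpow_add_INR by exact Hq0. f_equal. rewrite Ek. ring. }
  assert (Eb2 : qpow q (gamma + INR (S n + 1) - 1) = beta * RtoC q).
  { unfold beta. rewrite <- qpow_add_INR, <- (qpow_1 q Hq0), <- qpow_add by exact Hq0.
    f_equal. rewrite Ek1. ring. }
  assert (Etel : qpoch_inf (qpow q (gamma - alpha + INR (S n + 1))) (q ^ 2)
                 = qpoch_inf (qpow q (gamma - alpha + INR (S n) + 1)) (q ^ 2))
    by (rewrite Ek1, Ek; do 2 f_equal; ring).
  set (A := qpow q (gamma - alpha + INR (S n))).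
  assert (Eshift : qpoch_inf A (q ^ 2)
                   = (1 - A) * qpoch_inf (qpow q (gamma - alpha + INR (S n + 1) + 1)) (q ^ 2)).
  { rewrite qpoch_inf_shift by (split; [apply pow_le; lra | simpl; nra]).
    unfold A. rewrite <- (qpow_INR q 2 Hq0), <- qpow_add. do 2 f_equal.
    rewrite Ek1, Ek. simpl INR. rewrite RtoC_plus. f_equal. ring. }
  assert (EaA : a * A = beta * RtoC q).
  { unfold a, A, beta. rewrite <- qpow_add, <- qpow_add_INR, <- (qpow_1 q Hq0), <- qpow_add
      by exact Hq0.
    f_equal. rewrite Ek. ring. }
  assert (Epre : qpow q ((alpha + gamma + INR (S n)) / 2 - RtoC (3 / 4))
                 * qpow q ((alpha + gamma + INR (S n + 1)) / 2 - RtoC (3 / 4)) = a * beta).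
  { unfold a, beta. rewrite <- qpow_add_INR, <- !qpow_add by exact Hq0. f_equal.
    rewrite Ek1, Ek, RtoC_div by lra. field. }
  pose proof (HM (S n) ltac:(lia)) as HM1. pose proof (HM (S n + 1)%nat ltac:(lia)) as HM2.
  pose proof (HD (S n) ltac:(lia)) as HD1. pose proof (HD (S n + 1)%nat ltac:(lia)) as HD2.
  rewrite Eb1 in HD1. rewrite Eb2 in HD2.
  unfold xseq. rewrite Eb1, Eb2, Etel. fold A. rewrite Eshift.
  unfold contiguity_coeff. fold a.
  transitivity (qpow q ((alpha + gamma + INR (S n)) / 2 - RtoC (3 / 4))
                * qpow q ((alpha + gamma + INR (S n + 1)) / 2 - RtoC (3 / 4))
                * (1 - A) * (w * w) / ((1 - (1 - z) * beta) * (1 - (1 - z) * (beta * RtoC q)))).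
  - field. repeat split; assumption.
  - rewrite Epre, Hw. replace (a * beta * (1 - A)) with (a * beta - beta * (a * A)) by ring.
    rewrite EaA. field. split; assumption.
Qed.

Lemma RtoC_pow_S (b : C) q n : b * RtoC (q ^ S n) = b * RtoC (q ^ n) * RtoC q.
Proof. rewrite <- tech_pow_Rmult, RtoC_mult. ring. Qed.

Lemma qpoch_phi11_geom_recurrence a q z b n : (0 < q < 1)%R ->
  (forall j, 1 - b * RtoC (q ^ j) <> 0) -> qpoch_inf ((1 - z) * b) q <> 0 ->
  qpoch_phi11 a q z (b * RtoC (q ^ n)) = qpoch_phi11 a q z (b * RtoC (q ^ S n))
    - contiguity_coeff a q z (b * RtoC (q ^ n)) * qpoch_phi11 a q z (b * RtoC (q ^ S (S n))).
Proof.
  intros Hq Hb HP. rewrite !RtoC_pow_S. apply qpoch_phi11_recurrence; [exact Hq | |].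
  - intros j. rewrite <- Cmult_assoc, <- RtoC_mult, <- pow_add. apply Hb.
  - rewrite Cmult_assoc. apply qpoch_inf_neq0_shift; [lra | exact HP].
Qed.

Theorem mainTheorem13 (q : R) (alpha gamma z w : C) :
  (0 < q < 1)%R ->
  w * w = z ->
  (forall k : nat, (1 <= k)%nat ->
     qpoch_inf (qpow q (gamma - alpha + INR k + 1)) (q ^ 2) <> 0) ->
  (forall k : nat, (1 <= k)%nat ->
     1 - (1 - z) * qpow q (gamma + INR k - 1) <> 0) ->
  (forall j : nat, qpow q (gamma + INR j) <> 1) ->
  qpoch_inf ((1 - z) * qpow q gamma) q <> 0 ->
  frakF (fun k : nat =>
           qpow q ((alpha + gamma + INR k) / 2 - RtoC (3 / 4))
           * qpoch_inf (qpow q (gamma - alpha + INR k)) (q ^ 2) * w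
           / (qpoch_inf (qpow q (gamma - alpha + INR k + 1)) (q ^ 2)
              * (1 - (1 - z) * qpow q (gamma + INR k - 1))))
  = qpoch_inf (qpow q gamma) q / qpoch_inf ((1 - z) * qpow q gamma) q
    * phi11 (qpow q alpha) (qpow q gamma) q (- qpow q gamma * z).
Proof.
  intros Hq Hw HM HD Hg HP.
  set (a := qpow q alpha). set (b := qpow q gamma).
  change (frakF (xseq q alpha gamma z w) = qpoch_phi11 a q z b).
  assert (Hb : forall j, 1 - b * RtoC (q ^ j) <> 0).
  { intros j E. apply (Hg j). rewrite qpow_add_INR by lra. fold b.
    replace (b * RtoC (q ^ j)) with (1 - (1 - b * RtoC (q ^ j))) by ring. rewrite E. ring. }
  pose proof (xseq_adjacent_product q alpha gamma z w Hq Hw HM HD) as Hprod.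
  destruct (contiguity_coeff_geom_bound a q z b Hq) as [N [K HK]].
  rewrite (frakF_eq_of_recurrence _ (fun k => qpoch_phi11 a q z (b * RtoC (q ^ (k - 1)))) q (S N)
             (K / q) Hq).
  - simpl. f_equal. ring.
  - intros [|n] Hn; [lia |]. rewrite Hprod.
    eapply Rle_trans; [apply HK; lia |]. right. simpl. field. lra.
  - intros [|n] Hn; [lia |]. rewrite Hprod.
    replace (S n + 2 - 1)%nat with (S (S n)) by lia. simpl (S _ - 1)%nat.
    rewrite Nat.sub_0_r. apply qpoch_phi11_geom_recurrence; assumption.
  - apply Ccv_S_inv. eapply Ccv_ext; [| apply (qpoch_phi11_geom_to_1 a q z b Hq)].
    intros n. simpl. rewrite Nat.sub_0_r. reflexivity.
Qed.
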